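(* For every integer $t \geq 1$, no graph in $\mathcal{H}_t$ has an odd $4$-coloring (and hence no graph in $\mathcal{H}_t$ has a PCF $4$-coloring).
   Context: For $t\ge 1$, $\mathcal{H}_t$ is the class of finite simple graphs having a connected component that consists of exactly $t$ blocks, each of which is a $5$-cycle. An odd $c$-coloring is a proper coloring with at most $c$ colors such that every non-isolated vertex has a color appearing an odd number of times in its open neighborhood. A PCF $c$-coloring is a proper coloring with at most $c$ colors such that every non-isolated vertex has a color appearing exactly once in its open neighborhood. *)

From mathcomp Require Import all_boot.
Set Implicit Arguments. Unset Strict Implicit. Unset Printing Implicit Defensive.

Section Graphs.
Variable T : finType.
Variable e : rel T.

Definition simple_graph : Prop := symmetric e /\ irreflexive e.

Definition induced_rel (S : {set T}) : rel T :=
  [rel x y | [&& x \in S, y \in S & e x y]].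

(* G[S] is connected (the empty vertex set counts as connected) *)
Definition connected_set (S : {set T}) : Prop :=
  forall x y, x \in S -> y \in S -> connect (induced_rel S) x y.

Definition nonseparable (S : {set T}) : Prop :=
  S != set0 /\ connected_set S /\ forall v, v \in S -> connected_set (S :\ v).

(* vertex set of a block: a maximal connected subgraph without a cut vertex
   (blocks are induced subgraphs, so they are determined by their vertex set) *)
Definition is_block (B : {set T}) : Prop :=
  nonseparable B /\ forall B' : {set T}, B \subset B' -> nonseparable B' -> B' = B.

Definition induces_C5 (B : {set T}) : Prop :=
  exists f : 'I_5 -> T, injective f /\ B = [set f i | i in 'I_5] /\
    forall i j : 'I_5, e (f i) (f j) =
      (val j == (val i).+1 %% 5) || (val i == (val j).+1 %% 5).

Definition is_component (C : {set T}) : Prop :=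
  exists x, C = [set y | connect e x y].

Definition in_H (t : nat) : Prop :=
  exists C : {set T}, is_component C /\
    exists Bs : {set {set T}},
      #|Bs| = t /\
      (forall B : {set T}, B \in Bs <-> (is_block B /\ B \subset C)) /\
      (forall B : {set T}, B \in Bs -> induces_C5 B).

Definition nbhd (v : T) : {set T} := [set u | e v u].

Definition proper_col (k : nat) (c : T -> 'I_k) : Prop :=
  forall x y, e x y -> c x != c y.

Definition non_isolated (v : T) : Prop := exists u, e v u.

Definition odd_coloring (k : nat) (c : T -> 'I_k) : Prop :=
  proper_col c /\ forall v, non_isolated v ->
    exists a : 'I_k, odd #|[set u in nbhd v | c u == a]|.

Definition pcf_coloring (k : nat) (c : T -> 'I_k) : Prop :=
  proper_col c /\ forall v, non_isolated v ->
    exists a : 'I_k, #|[set u in nbhd v | c u == a]| = 1.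

End Graphs.

From mathcomp Require Import all_boot zify.
Set Implicit Arguments. Unset Strict Implicit. Unset Printing Implicit Defensive.

(* Let c be an odd colouring with at most four colours.  Two of the five vertices
   of an induced 5-cycle share a colour; being non-adjacent, they are the two
   cycle-neighbours of a third vertex m, so m sees a single colour in that block.
   On the other hand every vertex v of the component lies in some block whose two
   neighbours of v are coloured differently: otherwise the neighbourhood of v is a
   disjoint union of monochromatic pairs, one per block, and no colour appears an
   odd number of times around v.  Sending a block to such a block at its vertex m
   is a map on the blocks of the component; iterating it yields a cyclic sequence
   of at least two blocks, consecutive ones glued at pairwise distinct vertices.
   Their union is then nonseparable, against the maximality of blocks. *)
Section CycleOrbits.
Variables (T : finType) (f : T -> T).

Lemma fcycle_orbit_iter_order x : fcycle f (orbit f (iter (order f x) f x)).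
Proof.
have /trajectP[i lt_i Ei] := looping_order f x.
apply/(orbitPcycle 3 0); exists (order f x - i).-1.
by rewrite prednK ?subn_gt0 // Ei -iterD subnK // ltnW.
Qed.

Lemma iter_mod_order y n : fcycle f (orbit f y) -> iter n f y = iter (n %% order f y) f y.
Proof.
move=> /(orbitPcycle 0 4) periodic.
have iter_mul q : iter (q * order f y) f y = y.
  by elim: q => // q IH; rewrite mulSn iterD IH.
by rewrite {1}(divn_eq n (order f y)) addnC iterD iter_mul.
Qed.

Lemma eq_iter_mod y a b :
  fcycle f (orbit f y) -> iter a f y = iter b f y -> a = b %[mod order f y].
Proof.
move=> cyc; rewrite (iter_mod_order a cyc) (iter_mod_order b cyc) => E.
by rewrite -(findex_iter (ltn_pmod a (order_gt0 f y))) E findex_iter // ltn_pmod.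
Qed.

End CycleOrbits.

Definition c5_adj (i j : 'I_5) : bool :=
  (val j == (val i).+1 %% 5) || (val i == (val j).+1 %% 5).

Lemma c5_nbhd (i : 'I_5) :
  exists p q, p != q /\ forall l, c5_adj i l = (l == p) || (l == q).
Proof.
have hi := ltn_ord i.
exists (inord (i.+1 %% 5)), (inord ((i + 4) %% 5)); split=> [|l].
  by rewrite -val_eqE /= !inordK ?ltn_pmod //; lia.
have hl := ltn_ord l.
by rewrite /c5_adj -!val_eqE /= !inordK ?ltn_pmod //; lia.
Qed.

Lemma c5_common_nbr (i j : 'I_5) : i != j -> ~~ c5_adj i j ->
  exists m, forall l, c5_adj m l = (l == i) || (l == j).
Proof.
have hi := ltn_ord i; have hj := ltn_ord j.
rewrite /c5_adj -val_eqE /= => ij nadj.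
exists (inord (if val j == (i + 2) %% 5 then i.+1 %% 5 else (i + 4) %% 5)) => l.
have hl := ltn_ord l; rewrite -!val_eqE /= inordK; last by case: ifP; rewrite ltn_pmod.
by case: ifP; lia.
Qed.

Definition monochromatic (T : finType) (C : eqType) (c : T -> C) (A : {set T}) :=
  [forall u in A, forall v in A, c u == c v].

Lemma monochromatic_set2 (T : finType) (C : eqType) (c : T -> C) x y :
  monochromatic c [set x; y] = (c x == c y).
Proof.
apply/forall_inP/eqP => [/(_ x (set21 _ _))/forall_inP/(_ y (set22 _ _))/eqP //|cxy u].
by move=> /set2P[]->; apply/forall_inP => v /set2P[]->; rewrite ?cxy.
Qed.

Lemma even_colour_class (T : finType) (C : eqType) (c : T -> C)
    (P : {set {set T}}) (a : C) :
  trivIset P -> {in P, forall X : {set T}, ~~ odd #|X| && monochromatic c X} ->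
  ~~ odd #|[set u in cover P | c u == a]|.
Proof.
move=> tiP evenP; rewrite -sum1dep_card big_trivIset_cond //.
apply: (big_ind (fun n => ~~ odd n)) => // [m n|X /evenP/andP[evX monoX]].
  by rewrite oddD => /negbTE-> /negbTE->.
rewrite sum1dep_card.
have [/exists_inP[u uX /eqP <-]|noa] := boolP [exists u in X, c u == a].
  suff -> : [set v | (v \in X) && (c v == c u)] = X by [].
  apply/setP => v; rewrite inE; case vX: (v \in X) => //=.
  by move: monoX => /forall_inP/(_ v vX)/forall_inP/(_ u uX).
suff -> : [set v | (v \in X) && (c v == a)] = set0 by rewrite cards0.
apply/setP => v; rewrite !inE; apply: contraNF noa => /andP[vX cva].
by apply/exists_inP; exists v.
Qed.

Section Blocks.
Variables (T : finType) (e : rel T).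
Hypotheses (e_sym : symmetric e) (e_irr : irreflexive e).
Implicit Types (S B : {set T}) (u v x y z : T).

Lemma connect_induced_sym S : connect_sym (induced_rel e S).
Proof. by apply: sym_connect_sym => x y; rewrite /induced_rel /= e_sym andbCA. Qed.

Lemma connect_inducedS S S' :
  S \subset S' -> subrel (connect (induced_rel e S)) (connect (induced_rel e S')).
Proof.
move=> sSS'; apply: connect_sub => x y /and3P[xS yS exy]; apply: connect1.
by rewrite /induced_rel /= (subsetP sSS' x xS) (subsetP sSS' y yS).
Qed.

Lemma connect_induced S : subrel (connect (induced_rel e S)) (connect e).
Proof. by apply: connect_sub => x y /and3P[_ _ exy]; apply: connect1. Qed.

Lemma connected_set_from S z :
  (forall x, x \in S -> connect (induced_rel e S) z x) -> connected_set e S.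
Proof.
move=> zS x y /zS zx /zS zy.
by rewrite connect_induced_sym in zx; apply: connect_trans zx zy.
Qed.

Lemma connected_setU S1 S2 z : connected_set e S1 -> connected_set e S2 ->
  z \in S1 -> z \in S2 -> connected_set e (S1 :|: S2).
Proof.
move=> cS1 cS2 zS1 zS2; apply: (connected_set_from (z := z)) => x /setUP[xS|xS].
  exact: connect_inducedS (subsetUl _ _) _ _ (cS1 _ _ zS1 xS).
exact: connect_inducedS (subsetUr _ _) _ _ (cS2 _ _ zS2 xS).
Qed.

Lemma connected_set_le1 S : #|S| <= 1 -> connected_set e S.
Proof. by move=> /card_le1_eqP S1 x y xS yS; rewrite (S1 x y xS yS) connect0. Qed.

Lemma connected_setD1 S v : nonseparable e S -> connected_set e (S :\ v).
Proof.
case=> _ [cS cSD]; have [vS|vNS] := boolP (v \in S); first exact: cSD.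
by move: cS; rewrite (setDidPl _) // disjoint_sym disjoints1.
Qed.

Lemma connected_bigcup_chain (F : nat -> {set T}) m :
  (forall n, connected_set e (F n)) -> (forall n, n < m -> F n :&: F n.+1 != set0) ->
  connected_set e (\bigcup_(n < m.+1) F n).
Proof.
move=> cF; elim: m => [|m IH] link; first by rewrite big_ord1.
have [z /setIP[zm zm1]] := set0Pn _ (link m (ltnSn m)).
rewrite big_ord_recr /=; apply: connected_setU (IH _) (cF _) _ zm1.
  by move=> n lt_nm; apply: link; apply: ltnW.
by apply/bigcupP; exists ord_max.
Qed.

Lemma nonseparableU X Y p q : nonseparable e X -> nonseparable e Y -> p != q ->
  p \in X :&: Y -> q \in X :&: Y -> nonseparable e (X :|: Y).
Proof.
move=> nsX nsY pq /setIP[pX pY] /setIP[qX qY]; split; [|split].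
- by apply/set0Pn; exists p; rewrite inE pX.
- exact: connected_setU nsX.2.1 nsY.2.1 pX pY.
- move=> v _; rewrite setDUl.
  have [z [zv zX zY]] : exists z, [/\ z != v, z \in X & z \in Y].
    by case: (eqVneq p v) => [<-|pv]; [exists q; rewrite eq_sym | exists p].
  by apply: (@connected_setU _ _ z (connected_setD1 (v := v) nsX)
    (connected_setD1 (v := v) nsY)); rewrite !inE zv.
Qed.

Lemma block_eq B1 B2 p q : is_block e B1 -> is_block e B2 -> p != q ->
  p \in B1 :&: B2 -> q \in B1 :&: B2 -> B1 = B2.
Proof.
move=> [ns1 max1] [ns2 max2] pq pB qB.
have nsU := nonseparableU ns1 ns2 pq pB qB.
by rewrite -(max1 _ (subsetUl _ _) nsU) (max2 _ (subsetUr _ _) nsU).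
Qed.

Definition connectedb S := [forall x in S, forall y in S, connect (induced_rel e S) x y].

Lemma connectedP S : reflect (connected_set e S) (connectedb S).
Proof.
apply: (iffP forall_inP) => [cS x y xS|cS x xS]; first by move/forall_inP: (cS x xS); apply.
by apply/forall_inP => y; apply: cS.
Qed.

Definition nonseparableb S :=
  [&& S != set0, connectedb S & [forall v in S, connectedb (S :\ v)]].

Lemma nonseparableP S : reflect (nonseparable e S) (nonseparableb S).
Proof.
apply: (iffP and3P) => [[S0 /connectedP cS /forall_inP cSD]|[S0 [cS cSD]]].
  by split; [|split] => // v /cSD /connectedP.
by split; [|apply/connectedP|apply/forall_inP => v /cSD /connectedP].
Qed.

Lemma nonseparable_sub_block S : nonseparable e S -> exists2 B, is_block e B & S \subset B.
Proof.
move=> /nonseparableP nsS.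
have [B /maxsetP[/nonseparableP nsB maxB] sSB] := maxset_exists (P := nonseparableb) nsS.
by exists B => //; split=> // B' sBB' /nonseparableP nsB'; apply: maxB.
Qed.

Lemma edge_nonseparable u v : e u v -> nonseparable e [set u; v].
Proof.
move=> euv; have uv : u != v by apply: contraTneq euv => ->; rewrite e_irr.
split; [|split].
- by apply/set0Pn; exists u; rewrite set21.
- apply: (connected_set_from (z := u)) => x /set2P[->|->]; first exact: connect0.
  by apply: connect1; rewrite /induced_rel /= set21 set22.
- move=> w wS; apply: connected_set_le1.
  by have := cardsD1 w [set u; v]; rewrite cards2 uv wS add1n => -[<-].
Qed.

Section BlockCycle.
Variables (k : nat) (B : nat -> {set T}) (w : nat -> T).
Hypotheses (k_gt0 : 0 < k) (B_periodic : forall n, B (n + k) = B n).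
Hypothesis B_ns : forall n, nonseparable e (B n).
Hypothesis w_in : forall n, w n \in B n :&: B n.+1.
Hypothesis w_inj_mod : forall a b, w a = w b -> a = b %[mod k].

Lemma bigcup_periodic_shiftD (D : {set T}) j : j <= k ->
  (\bigcup_(i < k) B i) :\: D = \bigcup_(i < k) (B (j + i) :\: D).
Proof.
move=> le_jk; apply/setP => x; rewrite inE; apply/andP/bigcupP.
  case=> xND /bigcupP[i _ xBi]; have lt_ik := ltn_ord i.
  have [le_ji|lt_ij] := leqP j i.
    have lt : i - j < k by lia.
    by exists (Ordinal lt); rewrite //= subnKC // inE xND.
  have lt : i + k - j < k by lia.
  exists (Ordinal lt) => //=.
  have -> : j + (i + k - j) = i + k by lia.
  by rewrite B_periodic inE xND.
case=> i _ /setDP[xB xND]; split=> //; apply/bigcupP.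
have [lt|le] := ltnP (j + i) k; first by exists (Ordinal lt).
have lt : j + i - k < k by have := ltn_ord i; lia.
by exists (Ordinal lt); rewrite //= -B_periodic subnK.
Qed.

Lemma connected_bigcup_cycleD (D : {set T}) j : j <= k ->
  (forall n, connected_set e (B n :\: D)) -> (forall n, n.+1 < k -> w (j + n) \notin D) ->
  connected_set e ((\bigcup_(i < k) B i) :\: D).
Proof.
move=> le_jk cBD wND; rewrite (bigcup_periodic_shiftD D le_jk) -(prednK k_gt0).
apply: (connected_bigcup_chain (F := fun n => B (j + n) :\: D)) => // n lt_n.
apply/set0Pn; exists (w (j + n)).
have /setIP[wB wBS] := w_in (j + n).
have wD : w (j + n) \notin D by apply: wND; rewrite -ltn_predRL.
by rewrite !inE wD wB addnS wBS.
Qed.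

Lemma nonseparable_bigcup_cycle : nonseparable e (\bigcup_(i < k) B i).
Proof.
split; [|split].
- apply/set0Pn; exists (w 0); apply/bigcupP; exists (Ordinal k_gt0) => //.
  by have /setIP[] := w_in 0.
- rewrite -[\bigcup_(i < k) B i]setD0.
  apply: (@connected_bigcup_cycleD _ 0) => // n; last by rewrite inE.
  by rewrite setD0; case: (B_ns n) => _ [].
- move=> v _; have cBv n : connected_set e (B n :\ v) by apply: connected_setD1.
  case: (boolP [exists j : 'I_k, w j == v]) => [/existsP[j /eqP wj]|/existsPn wNv].
    (* Read the cycle from B j.+1 on. *)
    apply: (@connected_bigcup_cycleD _ j.+1) => // n lt_nk.
    rewrite inE -wj; apply/eqP => /w_inj_mod/eqP.
    by rewrite addSnnS -[X in _ == X %[mod _]]addn0 eqn_modDl mod0n modn_small.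
  apply: (@connected_bigcup_cycleD _ 0) => // n lt_nk.
  by rewrite inE; apply: (wNv (Ordinal (ltnW lt_nk))).
Qed.

End BlockCycle.

Lemma block_successor_set0 (Bs : {set {set T}}) (s : {set T} -> T) (g : T -> {set T}) :
  {in Bs, forall B, is_block e B} ->
  {in Bs, forall B, [/\ g (s B) \in Bs, s B \in B :&: g (s B) & g (s B) != B]} ->
  Bs = set0.
Proof.
move=> blockBs succ; apply/eqP; apply: contraT => /set0Pn[B0 B0Bs].
pose phi B := g (s B).
have iterBs n B : B \in Bs -> iter n phi B \in Bs.
  by elim: n => //= n IH /IH /succ[].
pose y := iter (order phi B0) phi B0; pose Bn n := iter n phi y.
have cyc : fcycle phi (orbit phi y) := fcycle_orbit_iter_order phi B0.
have y_periodic : iter (order phi y) phi y = y by apply/(orbitPcycle 0 4).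
have BnBs n : Bn n \in Bs := iterBs n y (iterBs _ B0 B0Bs).
have nsU : nonseparable e (\bigcup_(i < order phi y) Bn i).
  apply: (@nonseparable_bigcup_cycle _ _ (fun n => s (Bn n))) => [|n|n|n|a b].
  - exact: order_gt0.
  - by rewrite /Bn iterD y_periodic.
  - exact: (blockBs _ (BnBs n)).1.
  - by have [_ ] := succ _ (BnBs n).
  - move=> /= sab; have : Bn a.+1 = Bn b.+1 by rewrite /Bn !iterS /phi sab.
    by move=> /(eq_iter_mod cyc)/eqP; rewrite -addn1 -[b.+1]addn1 eqn_modDr => /eqP.
have maxU n : n < order phi y -> \bigcup_(i < order phi y) Bn i = Bn n.
  move=> lt_n; apply: (blockBs _ (BnBs n)).2 nsU.
  by apply: (bigcup_sup (Ordinal lt_n)).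
have Bn1 : Bn 1 = Bn 0.
  have [lt_1k|le_k1] := ltnP 1 (order phi y).
    by rewrite -(maxU 1 lt_1k) (maxU 0 (ltnW lt_1k)).
  have k1 : order phi y = 1 by have := order_gt0 phi y; lia.
  by move: y_periodic; rewrite k1.
by have [_ _] := succ _ (BnBs 0); rewrite -[g _]/(Bn 1) Bn1 eqxx.
Qed.

Lemma nbhd_C5 (f : 'I_5 -> T) i : (forall i j, e (f i) (f j) = c5_adj i j) ->
  nbhd e (f i) :&: [set f l | l in 'I_5] = [set f l | l in [set l | c5_adj i l]].
Proof.
move=> f_adj; apply/setP => u; rewrite !inE; apply/andP/imsetP => [[efu /imsetP[l _ ul]]|].
  by exists l; rewrite // inE -f_adj -ul.
by case=> l; rewrite inE -f_adj => efl ->; split; last exact: imset_f.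
Qed.

Lemma C5_nbhd_pair B v : induces_C5 e B -> v \in B ->
  exists p q, p != q /\ nbhd e v :&: B = [set p; q].
Proof.
case=> f [f_inj [-> f_adj]] /imsetP[i _ ->].
have [p [q [pq adj_i]]] := c5_nbhd i.
exists (f p), (f q); split; first by rewrite (inj_eq f_inj).
rewrite nbhd_C5 // (_ : [set l | c5_adj i l] = [set p; q]); last first.
  by apply/setP => l; rewrite !inE adj_i.
by rewrite imsetU1 imset_set1.
Qed.

Lemma C5_monochromatic_nbhd k (c : T -> 'I_k) B : k < 5 -> proper_col e c ->
  induces_C5 e B -> exists2 m, m \in B & monochromatic c (nbhd e m :&: B).
Proof.
move=> k_lt5 proper_c [f [f_inj [-> f_adj]]].
have {}f_adj i j : e (f i) (f j) = c5_adj i j := f_adj i j.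
have /injectivePn[i [j ij cij]] : ~~ injectiveb (c \o f).
  apply/injectiveP => /leq_card; rewrite !card_ord; lia.
have nadj : ~~ c5_adj i j.
  apply/negP => adj; have := proper_c (f i) (f j); rewrite f_adj adj.
  by move: cij => /= ->; rewrite eqxx => /(_ isT).
have [m adj_m] := c5_common_nbr ij nadj.
exists (f m); first exact: imset_f.
rewrite nbhd_C5 // (_ : [set l | c5_adj m l] = [set i; j]); last first.
  by apply/setP => l; rewrite !inE adj_m.
by rewrite imsetU1 imset_set1 monochromatic_set2; apply/eqP.
Qed.

Section OddColoring.
Variables (x0 : T) (Bs : {set {set T}}) (k : nat) (c : T -> 'I_k).
Hypothesis Bs_blocks :
  forall B, B \in Bs <-> is_block e B /\ B \subset [set y | connect e x0 y].
Hypothesis Bs_C5 : {in Bs, forall B, induces_C5 e B}.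
Hypotheses (k_lt5 : k < 5) (odd_c : odd_coloring e c).

Lemma edge_in_Bs B v u : B \in Bs -> v \in B -> e v u ->
  exists2 B', B' \in Bs & (v \in B') && (u \in B').
Proof.
move=> BBs vB evu; have [B' blB' sB'] := nonseparable_sub_block (edge_nonseparable evu).
have vB' : v \in B' by rewrite (subsetP sB') ?set21.
have uB' : u \in B' by rewrite (subsetP sB') ?set22.
exists B'; last by rewrite vB' uB'.
apply/Bs_blocks; split=> //; apply/subsetP => x xB'.
have /Bs_blocks[_ /subsetP/(_ v vB)] := BBs; rewrite !inE => x0v.
exact: connect_trans x0v (connect_induced (blB'.1.2.1 v x vB' xB')).
Qed.

Definition nbhd_pieces v := [set nbhd e v :&: B | B in Bs & v \in B].

Lemma cover_nbhd_pieces B0 v : B0 \in Bs -> v \in B0 -> cover (nbhd_pieces v) = nbhd e v.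
Proof.
move=> B0Bs vB0; rewrite cover_imset; apply/setP => u.
apply/idP/idP => [/bigcupP[B _ /setIP[]//]|vu].
have evu : e v u by rewrite inE in vu.
have [B BBs /andP[vB uB]] := edge_in_Bs B0Bs vB0 evu.
by apply/bigcupP; exists B; rewrite !inE ?BBs ?vB ?uB ?evu.
Qed.

Lemma trivIset_nbhd_pieces v : trivIset (nbhd_pieces v).
Proof.
apply/trivIsetP => _ _ /imsetP[B1 /setIdP[B1Bs vB1] ->]
  /imsetP[B2 /setIdP[B2Bs vB2] ->] neq.
rewrite -setI_eq0; apply: contraTT neq => /set0Pn[u /setIP[/setIP[vu uB1] /setIP[_ uB2]]].
have uv : v != u by apply: contraTneq vu => <-; rewrite inE e_irr.
have [blB1 _] := (Bs_blocks B1).1 B1Bs; have [blB2 _] := (Bs_blocks B2).1 B2Bs.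
have B12 : B1 = B2 by apply: (block_eq blB1 blB2 uv); rewrite inE ?vB1 ?uB1.
by rewrite B12 eqxx.
Qed.

Lemma nonmonochromatic_block B0 v : B0 \in Bs -> v \in B0 ->
  exists2 B, B \in Bs & (v \in B) && ~~ monochromatic c (nbhd e v :&: B).
Proof.
move=> B0Bs vB0; apply/exists_inP/contraT; rewrite negb_exists_in => /forall_inP mono.
have [p [q [pq nbhd_v]]] := C5_nbhd_pair (Bs_C5 B0Bs) vB0.
have evp : e v p by have := set21 p q; rewrite -nbhd_v !inE => /andP[].
have [a odd_a] := odd_c.2 v (ex_intro _ p evp).
suff : ~~ odd #|[set u in cover (nbhd_pieces v) | c u == a]|.
  by rewrite (cover_nbhd_pieces B0Bs vB0) odd_a.
apply: even_colour_class (trivIset_nbhd_pieces v) _ => _ /imsetP[B /setIdP[BBs vB] ->].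
have := mono B BBs; rewrite vB negbK => monoB.
have [p' [q' [pq' nbhdB]]] := C5_nbhd_pair (Bs_C5 BBs) vB.
by rewrite monoB nbhdB cards2 pq'.
Qed.

Lemma odd_coloring_Bs_set0 : Bs = set0.
Proof.
pose s B := odflt x0 [pick m in B | monochromatic c (nbhd e m :&: B)].
pose g v := odflt set0 [pick B in Bs | (v \in B) && ~~ monochromatic c (nbhd e v :&: B)].
apply: (block_successor_set0 (s := s) (g := g)) => [B /Bs_blocks[]//|B BBs].
have [sB mono_sB] : s B \in B /\ monochromatic c (nbhd e (s B) :&: B).
  rewrite /s; case: pickP => [m /andP[]//|none].
  have [m mB mono_m] := C5_monochromatic_nbhd k_lt5 odd_c.1 (Bs_C5 BBs).
  by have := none m; rewrite mB mono_m.
have [gBs sg nmono] : [/\ g (s B) \in Bs, s B \in g (s B)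
                        & ~~ monochromatic c (nbhd e (s B) :&: g (s B))].
  rewrite /g; case: pickP => [B' /and3P[]//|none].
  have [B' B'Bs /andP[sB' nmono]] := nonmonochromatic_block BBs sB.
  by have := none B'; rewrite B'Bs sB' nmono.
split=> //; first by rewrite inE sB sg.
by apply: contraNneq nmono => ->.
Qed.

End OddColoring.

End Blocks.

Theorem mainTheorem4 :
  forall (t : nat) (T : finType) (e : rel T),
    1 <= t -> simple_graph e -> in_H e t ->
    (~ exists c : T -> 'I_4, odd_coloring e c) /\
    (~ exists c : T -> 'I_4, pcf_coloring e c).
Proof.
move=> t T e t_gt0 [e_sym e_irr] [_ [[x0 ->] [Bs [card_Bs [Bs_blocks Bs_C5]]]]].
have no_odd : ~ exists c : T -> 'I_4, odd_coloring e c.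
  case=> c odd_c; move: t_gt0.
  by rewrite -card_Bs (odd_coloring_Bs_set0 e_sym e_irr Bs_blocks Bs_C5 _ odd_c) ?cards0.
split=> // -[c [proper_c pcf_c]]; apply: no_odd; exists c; split=> // v /pcf_c[a ca].
by exists a; rewrite ca.
Qed.
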